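(* For any positive integer $T$, $x \in \{0,1\}^T$ and $p \in [0,1]^T$, $$\mathsf{smCE}(x,p) \le \left|\sum_{\alpha \in [0,1]} \Delta_\alpha\right| + \sum_{\alpha \in [0,1]} |\alpha - 1/2|\cdot|\Delta_\alpha|,$$ where $\Delta_\alpha = \sum_{t=1}^T (x_t - p_t)\mathbf{1}[p_t = \alpha]$.
   Context: $\mathsf{smCE}(x,p) = \sup_{f \in \mathcal{F}} \sum_{t=1}^T f(p_t)(x_t - p_t)$, where $\mathcal{F}$ is the family of $1$-Lipschitz functions from $[0,1]$ to $[-1,1]$. Sums over $\alpha \in [0,1]$ have only finitely many nonzero terms. *)

From mathcomp Require Import all_boot all_order all_algebra.
From mathcomp Require Import all_classical all_reals.
Set Implicit Arguments. Unset Strict Implicit. Unset Printing Implicit Defensive.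
Import Order.TTheory GRing.Theory Num.Theory.
Local Open Scope classical_set_scope.
Local Open Scope ring_scope.

Definition lip1 (R : realType) (f : R -> R) : Prop :=
  (forall a, 0 <= a <= 1 -> -1 <= f a <= 1) /\
  (forall a b, 0 <= a <= 1 -> 0 <= b <= 1 -> `|f a - f b| <= `|a - b|).

Definition smCE (R : realType) (T : nat) (x p : 'I_T -> R) : R :=
  sup [set v : R | exists f : R -> R, lip1 f /\
         v = \sum_(t < T) f (p t) * (x t - p t)].

Definition Delta (R : realType) (T : nat) (x p : 'I_T -> R) (a : R) : R :=
  \sum_(t < T | p t == a) (x t - p t).

Definition unit_itv (R : realType) : set R := [set a : R | 0 <= a <= 1].

From mathcomp Require Import all_boot all_order all_algebra.
From mathcomp Require Import all_classical all_reals.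
Import Order.TTheory GRing.Theory Num.Theory.
Local Open Scope classical_set_scope.
Local Open Scope ring_scope.

(* Grouping the terms of sum_t f(p_t)(x_t - p_t) by the value a = p_t turns it
   into sum_a f(a) Delta_a.  Splitting f(a) = f(c) + (f(a) - f(c)) at the centre
   c = 1/2, the constant part is at most |sum_a Delta_a| because |f| <= 1, and
   the remainder is at most sum_a |a - c| |Delta_a| because f is 1-Lipschitz. *)

Lemma sum_mul_fibres (I : finType) (K : eqType) (V : pzSemiRingType)
    (v : I -> K) (f : K -> V) (g : I -> V) :
  \sum_i f (v i) * g i = \sum_(a <- undup (codom v)) f a * \sum_(i | v i == a) g i.
Proof.
under [RHS]eq_bigr do rewrite mulr_sumr big_mkcond /=.
rewrite exchange_big /=; apply: eq_bigr => i _.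
have vi_codom : v i \in undup (codom v) by rewrite mem_undup codom_f.
rewrite (bigD1_seq (v i)) ?undup_uniq //= eqxx big1 ?addr0 //.
by move=> a /negPf; rewrite eq_sym => ->.
Qed.

Section LipschitzPairing.
Variable R : realType.

Lemma lip1_cst0 : lip1 (fun _ : R => 0).
Proof.
split=> [a _|a b _ _]; first by rewrite lerN10 ler01.
by rewrite subrr normr0.
Qed.

Lemma lip1_sum_mul_le (f : R -> R) (c : R) (s : seq R) (d : R -> R) :
  lip1 f -> 0 <= c <= 1 -> {in s, forall a, 0 <= a <= 1} ->
  \sum_(a <- s) f a * d a <=
    `|\sum_(a <- s) d a| + \sum_(a <- s) `|a - c| * `|d a|.
Proof.
move=> [f_bound f_lip] c01 s01.
have -> : \sum_(a <- s) f a * d a =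
    f c * \sum_(a <- s) d a + \sum_(a <- s) (f a - f c) * d a.
  by rewrite mulr_sumr -big_split /=; apply: eq_bigr => a _; rewrite mulrBl addrC subrK.
apply: lerD.
  apply: (le_trans (ler_norm _)); rewrite normrM ler_piMl //.
  by rewrite ler_norml f_bound.
rewrite big_seq [leRHS]big_seq; apply: ler_sum => a a_s.
apply: (le_trans (ler_norm _)); rewrite normrM ler_wpM2r //.
exact: f_lip (s01 a a_s) c01.
Qed.

End LipschitzPairing.

Section DeltaSupport.
Context {R : realType} {T : nat} {p : 'I_T -> R}.

Lemma Delta_eq0 (x : 'I_T -> R) a : a \notin codom p -> Delta x p a = 0.
Proof.
move=> a_notin; rewrite /Delta big1 // => t /eqP pt_a.
by move: a_notin; rewrite -pt_a codom_f.
Qed.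

Hypothesis p01 : forall t, 0 <= p t <= 1.

Lemma fsum_unit_itv_values (F : R -> R) :
  (forall a, a \notin codom p -> F a = 0) ->
  \sum_(a \in @unit_itv R) F a = \sum_(a <- undup (codom p)) F a.
Proof.
move=> F0; rewrite [RHS]fsbig_seq ?undup_uniq //.
apply: esym; apply: fsbig_widen => a /=.
  by rewrite mem_undup => /codomP [t ->]; exact: p01.
by move=> [_]; rewrite mem_undup => /negP/F0.
Qed.

End DeltaSupport.

Theorem lemma6 (R : realType) (T : nat) (x p : 'I_T -> R) :
  (0 < T)%N ->
  (forall t, x t = 0 \/ x t = 1) ->
  (forall t, 0 <= p t <= 1) ->
  smCE x p <=
    `| \sum_(a \in @unit_itv R) Delta x p a |
    + \sum_(a \in @unit_itv R) `|a - 2^-1| * `|Delta x p a|.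
Proof.
move=> _ _ p01.
rewrite !(fsum_unit_itv_values p01) => [|a /Delta_eq0 ->|a /Delta_eq0 ->];
  rewrite ?normr0 ?mulr0 //.
have half01 : 0 <= (2^-1 : R) <= 1.
  by rewrite invr_ge0 ler0n /= invf_le1 ?ler1n ?ltr0n.
apply: ge_sup.
  by exists 0, (fun=> 0); split; [exact: lip1_cst0 | rewrite big1 // => t _; rewrite mul0r].
move=> _ [f [lip_f ->]]; rewrite sum_mul_fibres.
apply: lip1_sum_mul_le => // a; rewrite mem_undup => /codomP [t ->]; exact: p01.
Qed.
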